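(* Let $\Gamma$ be a finite group, let $\mathcal{A},\mathcal{A}'$ be additive categories, let $\Gamma$ pseudo-act on $\mathcal{A}'$, and let $f^*:\mathcal{A}\to\mathcal{A}'$ be an additive functor which is $\Gamma$-equivariant for the trivial action on $\mathcal{A}$ (all as explained in the context). (a) If $f^*$ has descent, then $f^*$ is Cartesian and admits a trace structure. (b) Conversely, if $\mathcal{A}$ is pseudo-abelian (idempotent complete) and $\mathbf{Z}[1/|\Gamma|]$-linear, and $f^*$ is Cartesian and admits a trace structure, then $f^*$ has descent.
   Context: A pseudo-action of $\Gamma$ on $\mathcal{A}'$ consists of additive functors $g^*:\mathcal{A}'\to\mathcal{A}'$ ($g\in\Gamma$) and natural isomorphisms $c_{g,h}:h^*g^*\Rightarrow (gh)^*$ satisfying the usual coherence conditions. $\Gamma$-equivariance of $f^*$ means we are given natural isomorphisms $i_g:g^*f^*\Rightarrow f^*$ compatible with the $c_{g,h}$. A descent datum is a pair $(C,(b_g)_{g\in\Gamma})$ with $C\in\mathcal{A}'$ and isomorphisms $b_g:g^*C\to C$ such that $b_h\circ h^*(b_g)=b_{gh}\circ c_{g,h}(C)$ for all $g,h$; a morphism $(C,(b_g))\to(D,(b'_g))$ is a morphism $\phi:C\to D$ with $\phi\circ b_g=b'_g\circ g^*\phi$ for all $g$. These form a category $\mathcal{A}'[\Gamma]$, and $\hat f^*:\mathcal{A}\to\mathcal{A}'[\Gamma]$ sends $A$ to $(f^*A,(i_g(A))_g)$. We say $f^*$ has descent if $\hat f^*$ is an equivalence of categories. Suppose $f^*$ has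 a right adjoint $f_*$ with unit $\eta$ and counit $\epsilon$. For $C\in\mathcal{A}'$ let $\kappa_C:f^*f_*C\to\bigoplus_{g\in\Gamma}g^*C$ be the morphism whose $g$-component is $g^*(\epsilon_C)\circ i_g(f_*C)^{-1}$. $f^*$ is called Cartesian if $f_*$ exists and $\kappa_C$ is an isomorphism for every $C$. For a descent datum $(C,(b_g))$ put $u_C=(\bigoplus_g b_g)\circ\kappa_C:f^*f_*C\to\bigoplus_{g\in\Gamma}C$; for $C=f^*A$ the descent datum used is $(i_g(A))$. A trace structure on a Cartesian $f^*$ is a natural transformation $\operatorname{tr}:f_*f^*\Rightarrow\operatorname{Id}_{\mathcal{A}}$ such that for every $A\in\mathcal{A}$: (1) $\operatorname{tr}_A\circ\eta_A=|\Gamma|\cdot 1_A$; (2) $f^*(\operatorname{tr}_A)=\Sigma\circ u_{f^*A}$, where $\Sigma:\bigoplus_{g\in\Gamma}f^*A\to f^*A$ is the sum map. *)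

From HB Require Import structures.
From mathcomp Require Import all_boot all_order all_algebra all_fingroup.
From Stdlib Require Import ProofIrrelevance.
Set Implicit Arguments. Unset Strict Implicit. Unset Printing Implicit Defensive.
Import GRing.Theory.
Local Open Scope ring_scope.

Record Cat := {
  cobj :> Type;
  chom : cobj -> cobj -> Type;
  cid : forall a, chom a a;
  ccomp : forall a b c, chom b c -> chom a b -> chom a c;
  ccompA : forall a b c d (h : chom c d) (g : chom b c) (f : chom a b),
      ccomp h (ccomp g f) = ccomp (ccomp h g) f;
  ccomp1f : forall a b (f : chom a b), ccomp (cid b) f = f;
  ccompf1 : forall a b (f : chom a b), ccomp f (cid a) = f }.
Arguments cid {c} a : rename.
Arguments ccomp {c a b c0} : rename.
Arguments chom : clear implicits.

Definition is_iso (C : Cat) (a b : C) (f : chom C a b) : Prop :=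
  exists g : chom C b a, ccomp g f = cid a /\ ccomp f g = cid b.

Record Functor (C D : Cat) := {
  fobj :> C -> D;
  fmap : forall a b, chom C a b -> chom D (fobj a) (fobj b);
  fmap_id : forall a, fmap (cid a) = cid (fobj a);
  fmap_comp : forall a b c (g : chom C b c) (f : chom C a b),
      fmap (ccomp g f) = ccomp (fmap g) (fmap f) }.
Arguments fmap {C D} F {a b} : rename.

Section FunctorOps.
Variables C D E : Cat.
Definition Fid : Functor C C.
Proof. by refine {| fobj := fun a => a; fmap := fun a b f => f |}. Defined.

Definition Fcomp (G : Functor D E) (F : Functor C D) : Functor C E.
Proof.
refine {| fobj := fun a => G (F a); fmap := fun a b f => fmap G (fmap F f) |}.
- by move=> a; rewrite (fmap_id F) (fmap_id G).
- by move=> a b c g f; rewrite (fmap_comp F) (fmap_comp G).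
Defined.
End FunctorOps.

Definition natural (C D : Cat) (F G : Functor C D)
  (alpha : forall a : C, chom D (F a) (G a)) : Prop :=
  forall a b (f : chom C a b), ccomp (fmap G f) (alpha a) = ccomp (alpha b) (fmap F f).

Definition nat_isomorphic (C D : Cat) (F G : Functor C D) : Prop :=
  exists alpha : forall a : C, chom D (F a) (G a),
    natural alpha /\ forall a, is_iso (alpha a).

Definition equivalence (C D : Cat) (F : Functor C D) : Prop :=
  exists G : Functor D C,
    nat_isomorphic (Fcomp G F) (Fid C) /\ nat_isomorphic (Fcomp F G) (Fid D).

Record PreAdd := {
  pobj :> Type;
  phom : pobj -> pobj -> zmodType;
  pid : forall a, phom a a;
  pcomp : forall a b c, phom b c -> phom a b -> phom a c;
  pcompA : forall a b c d (h : phom c d) (g : phom b c) (f : phom a b),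
      pcomp h (pcomp g f) = pcomp (pcomp h g) f;
  pcomp1f : forall a b (f : phom a b), pcomp (pid b) f = f;
  pcompf1 : forall a b (f : phom a b), pcomp f (pid a) = f;
  pcompDl : forall a b c (g1 g2 : phom b c) (f : phom a b),
      pcomp (g1 + g2) f = pcomp g1 f + pcomp g2 f;
  pcompDr : forall a b c (g : phom b c) (f1 f2 : phom a b),
      pcomp g (f1 + f2) = pcomp g f1 + pcomp g f2 }.
Arguments pid {p} a : rename.
Arguments pcomp {p a b c} : rename.
Arguments phom : clear implicits.

Definition PCat (A : PreAdd) : Cat :=
  {| cobj := A; chom := fun a b => (phom A a b : Type);
     cid := @pid A; ccomp := @pcomp A;
     ccompA := @pcompA A; ccomp1f := @pcomp1f A; ccompf1 := @pcompf1 A |}.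

Record biproduct (A : PreAdd) (I : finType) (X : I -> A) := {
  bp_obj : A;
  bp_inj : forall i, phom A (X i) bp_obj;
  bp_proj : forall i, phom A bp_obj (X i);
  bp_projinj : forall i, pcomp (bp_proj i) (bp_inj i) = pid (X i);
  bp_proj_inj0 : forall i j, i != j -> pcomp (bp_proj i) (bp_inj j) = 0;
  bp_sum : \sum_i pcomp (bp_inj i) (bp_proj i) = pid bp_obj }.

Definition additive_cat (A : PreAdd) : Prop :=
  forall (I : finType) (X : I -> A), inhabited (biproduct X).

Definition additive_functor (A B : PreAdd) (F : Functor (PCat A) (PCat B)) : Prop :=
  forall a b (x y : phom A a b),
    (fmap F (x + y) : phom B (F a) (F b)) = fmap F x + fmap F y.

Definition pseudo_abelian (A : PreAdd) : Prop :=
  forall a (e : phom A a a), pcomp e e = e ->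
    exists b (r : phom A a b) (s : phom A b a), pcomp r s = pid b /\ pcomp s r = e.

(* Z[1/n]-linear: every Hom group is a Z[1/n]-module, i.e. n acts bijectively *)
Definition Zinv_linear (n : nat) (A : PreAdd) : Prop :=
  forall a b, bijective (fun x : phom A a b => x *+ n).

Section PseudoAction.
Variables (Gam : finGroupType) (A' : PreAdd).

Definition act_cast (act : Gam -> Functor (PCat A') (PCat A')) (g g' : Gam)
  (e : g = g') (X : A') : phom A' (act g X) (act g' X) :=
  match e in _ = g' return phom A' (act g X) (act g' X) with
  | erefl => pid (act g X) end.

Record pseudo_action := {
  pa_fun :> Gam -> Functor (PCat A') (PCat A');
  pa_add : forall g, additive_functor (pa_fun g);
  pa_c : forall (g h : Gam) (X : A'),
      phom A' (pa_fun h (pa_fun g X)) (pa_fun (g * h)%g X);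
  pa_c_nat : forall g h (X Y : A') (phi : phom A' X Y),
      pcomp (fmap (pa_fun (g * h)%g) phi) (pa_c g h X)
      = pcomp (pa_c g h Y) (fmap (pa_fun h) (fmap (pa_fun g) phi));
  pa_c_iso : forall g h X, is_iso (C := PCat A') (pa_c g h X);
  pa_e : forall X : A', phom A' (pa_fun 1%g X) X;
  pa_e_nat : forall (X Y : A') (phi : phom A' X Y),
      pcomp phi (pa_e X) = pcomp (pa_e Y) (fmap (pa_fun 1%g) phi);
  pa_e_iso : forall X, is_iso (C := PCat A') (pa_e X);
  pa_assoc : forall g h k (X : A'),
      pcomp (act_cast pa_fun (esym (mulgA g h k)) X)
            (pcomp (pa_c (g * h)%g k X) (fmap (pa_fun k) (pa_c g h X)))
      = pcomp (pa_c g (h * k)%g X) (pa_c h k (pa_fun g X));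
  pa_unit_r : forall g (X : A'),
      pcomp (act_cast pa_fun (mulg1 g) X) (pa_c g 1%g X) = pa_e (pa_fun g X);
  pa_unit_l : forall h (X : A'),
      pcomp (act_cast pa_fun (mul1g h) X) (pa_c 1%g h X) = fmap (pa_fun h) (pa_e X) }.
End PseudoAction.

Record equivariance (Gam : finGroupType) (A A' : PreAdd) (pa : pseudo_action Gam A')
    (f : Functor (PCat A) (PCat A')) := {
  eq_i : forall (g : Gam) (a : A), phom A' (pa g (f a)) (f a);
  eq_iinv : forall (g : Gam) (a : A), phom A' (f a) (pa g (f a));
  eq_i_nat : forall g (a b : A) (phi : phom A a b),
      pcomp (fmap f phi : phom A' _ _) (eq_i g a)
      = pcomp (eq_i g b) (fmap (pa g) (fmap f phi));
  eq_i_inv1 : forall g a, pcomp (eq_iinv g a) (eq_i g a) = pid _;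
  eq_i_inv2 : forall g a, pcomp (eq_i g a) (eq_iinv g a) = pid _;
  eq_i_coc : forall g h a,
      pcomp (eq_i (g * h)%g a) (pa_c pa g h (f a))
      = pcomp (eq_i h a) (fmap (pa h) (eq_i g a)) }.

Lemma sig_eqP (T : Type) (P : T -> Prop) (x y : sig P) :
  proj1_sig x = proj1_sig y -> x = y.
Proof.
case: x y => [x px] [y py] /= exy; subst y.
by rewrite (proof_irrelevance _ px py).
Qed.

Section Descent.
Variables (Gam : finGroupType) (A' : PreAdd) (pa : pseudo_action Gam A').

Record ddatum := {
  dd_obj : A';
  dd_b : forall g : Gam, phom A' (pa g dd_obj) dd_obj;
  dd_iso : forall g, is_iso (C := PCat A') (dd_b g);
  dd_coc : forall g h : Gam,
      pcomp (dd_b h) (fmap (pa h) (dd_b g)) = pcomp (dd_b (g * h)%g) (pa_c pa g h dd_obj) }.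

Definition ddhom (D E : ddatum) : Type :=
  { phi : phom A' (dd_obj D) (dd_obj E) |
    forall g, pcomp phi (dd_b D g) = pcomp (dd_b E g) (fmap (pa g) phi) }.

Definition ddid (D : ddatum) : ddhom D D.
Proof.
exists (pid (dd_obj D)) => g.
by rewrite pcomp1f (fmap_id (pa g)) /= pcompf1.
Defined.

Definition ddcomp (D E F : ddatum) (psi : ddhom E F) (phi : ddhom D E) : ddhom D F.
Proof.
exists (pcomp (proj1_sig psi) (proj1_sig phi)) => g.
case: psi phi => [psi hpsi] [phi hphi] /=.
rewrite -pcompA hphi pcompA hpsi -pcompA.
by rewrite (fmap_comp (pa g)).
Defined.

Definition DescentCat : Cat.
Proof.
refine {| cobj := ddatum; chom := ddhom; cid := ddid; ccomp := ddcomp |}.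
- by move=> a b c d h g f; apply: sig_eqP => /=; rewrite pcompA.
- by move=> a b f; apply: sig_eqP => /=; rewrite pcomp1f.
- by move=> a b f; apply: sig_eqP => /=; rewrite pcompf1.
Defined.

Variables (A : PreAdd) (f : Functor (PCat A) (PCat A')) (E : equivariance pa f).

Definition hat_obj (a : A) : ddatum.
Proof.
refine {| dd_obj := f a; dd_b := fun g => eq_i E g a |}.
- by move=> g; exists (eq_iinv E g a); split; [exact: eq_i_inv1 | exact: eq_i_inv2].
- by move=> g h; rewrite eq_i_coc.
Defined.

Definition hat_map (a b : A) (phi : phom A a b) : ddhom (hat_obj a) (hat_obj b).
Proof. by exists (fmap f phi) => g; apply: eq_i_nat. Defined.

Definition hat_f : Functor (PCat A) DescentCat.
Proof.
refine (@Build_Functor (PCat A) DescentCat hat_obj hat_map _ _).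
- by move=> a; apply: sig_eqP => /=; rewrite (fmap_id f).
- by move=> a b c g h; apply: sig_eqP => /=; rewrite (fmap_comp f).
Defined.

Definition has_descent : Prop := equivalence hat_f.

Record adjunction (G : Functor (PCat A') (PCat A)) := {
  adj_eta : forall a : A, phom A a (G (f a));
  adj_eps : forall c : A', phom A' (f (G c)) c;
  adj_eta_nat : natural (F := Fid (PCat A)) (G := Fcomp G f) adj_eta;
  adj_eps_nat : natural (F := Fcomp f G) (G := Fid (PCat A')) adj_eps;
  adj_tri1 : forall a : A, pcomp (adj_eps (f a)) (fmap f (adj_eta a)) = pid (f a);
  adj_tri2 : forall c : A', pcomp (fmap G (adj_eps c)) (adj_eta (G c)) = pid (G c) }.

Variables (G : Functor (PCat A') (PCat A)) (adj : adjunction G).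

(* g-component of kappa_C : f^* f_* C -> (+)_g g^* C *)
Definition kappa_comp (g : Gam) (C : A') : phom A' (f (G C)) (pa g C) :=
  pcomp (fmap (pa g) (adj_eps adj C)) (eq_iinv E g (G C)).

Definition cartesian : Prop :=
  forall (C : A') (B : biproduct (fun g : Gam => pa g C)),
    is_iso (C := PCat A') (\sum_g pcomp (bp_inj B g) (kappa_comp g C)).

(* trace structure; condition (2) written with Sigma o u_{f^*A} unfolded:
   Sigma o (+)_g b_g o kappa = sum_g b_g o kappa_g *)
Definition trace_structure (tr : forall a : A, phom A (G (f a)) a) : Prop :=
  natural (F := Fcomp G f) (G := Fid (PCat A)) tr /\
  (forall a : A, pcomp (tr a) (adj_eta adj a) = pid a *+ #|Gam|) /\
  (forall a : A, (fmap f (tr a) : phom A' _ _)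
                 = \sum_g pcomp (eq_i E g a) (kappa_comp g (f a))).
End Descent.

(* (a) If [hat f^*] is an equivalence, [f^*] is fully faithful and every descent
   datum is isomorphic to some [hat f^* A].  Realising in this way the coinduced
   datum on [(+)_g g^* C], whose morphisms from [hat f^* A] are the morphisms
   [f^* A -> C], gives the right adjoint [f_* C]; [kappa_C] then becomes the
   family of projections, hence an isomorphism, and the trace is the preimage of
   the descent morphism [Sigma o u].
   (b) For a descent datum [(C, b)], [Sigma o u_C : f^* f_* C -> C] is a descent
   morphism, and the inverse of [kappa_C] turns the [b_g^-1] into a map
   [s : C -> f^* f_* C] with [(Sigma o u_C) o s = |Gamma|] and [eps o s = 1].
   Dividing the adjoint transpose of [Sigma o u_C] by [|Gamma|] gives an
   idempotent [p] of [f_* C] with [f^* p = s o (Sigma o u_C) / |Gamma|]; its image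
   descends [(C, b)], and for [hat f^* A] the trace axioms identify it with [A]. *)

From Pilot Require Import Defs.
From mathcomp Require Import all_boot all_order all_algebra all_fingroup.
From Stdlib Require Import ClassicalEpsilon.
(* So that [pcomp] is composition in a [PreAdd], not ssrfun's composition of
   partial functions. *)
Import Defs.
Set Implicit Arguments. Unset Strict Implicit. Unset Printing Implicit Defensive.
Import GRing.Theory.
Local Open Scope ring_scope.

Section AdditiveMorphism.
Variables (U V : zmodType) (F : U -> V).
Hypothesis FD : {morph F : x y / x + y}.

Lemma addmorph0 : F 0 = 0.
Proof. by apply: (addrI (F 0)); rewrite -FD !addr0. Qed.

Lemma addmorph_sum (I : Type) (r : seq I) (P : pred I) (G : I -> U) :
  F (\sum_(i <- r | P i) G i) = \sum_(i <- r | P i) F (G i).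
Proof. exact: (big_morph F FD addmorph0). Qed.

Lemma addmorphMn x n : F (x *+ n) = F x *+ n.
Proof. by elim: n => [|n IH]; rewrite ?addmorph0 // !mulrS FD IH. Qed.

End AdditiveMorphism.

Section CategoryFacts.
Variable C : Cat.

Lemma iso_cancelr (a b c : C) (u : chom C a b) (x y : chom C b c) :
  is_iso u -> ccomp x u = ccomp y u -> x = y.
Proof.
by case=> v [_ uv] e; rewrite -(ccompf1 x) -(ccompf1 y) -uv !ccompA e.
Qed.

Lemma iso_cancell (a b c : C) (u : chom C b c) (x y : chom C a b) :
  is_iso u -> ccomp u x = ccomp u y -> x = y.
Proof.
by case=> v [vu _] e; rewrite -(ccomp1f x) -(ccomp1f y) -vu -!ccompA e.
Qed.

End CategoryFacts.

Section Equivalence.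
Variables (C D : Cat) (F : Functor C D).

Definition full_functor : Prop :=
  forall a b (z : chom D (F a) (F b)), exists y, fmap F y = z.

Definition faithful_functor : Prop :=
  forall a b (y y' : chom C a b), fmap F y = fmap F y' -> y = y'.

Definition ess_surjective : Prop :=
  forall d : D, exists c (u : chom D (F c) d), is_iso u.

End Equivalence.

Lemma nat_iso_id_faithful (C D : Cat) (F : Functor C D) (Q : Functor D C) :
  nat_isomorphic (Fcomp Q F) (Fid C) -> faithful_functor F.
Proof.
case=> al [al_nat al_iso] a b y y' e; apply: (iso_cancelr (al_iso a)).
by rewrite (al_nat _ _ y) (al_nat _ _ y') /= e.
Qed.

Section EquivalenceFacts.
Variables (C D : Cat) (F : Functor C D).

Lemma equivalence_faithful : equivalence F -> faithful_functor F.
Proof. by case=> Q [FQ _]; exact: nat_iso_id_faithful FQ. Qed.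

Lemma equivalence_full : equivalence F -> full_functor F.
Proof.
case=> Q [[al [al_nat al_iso]] QF] a b z.
have Q_faithful := nat_iso_id_faithful QF.
have [v [va av]] := al_iso a.
pose y := ccomp (al b) (ccomp (fmap Q z) v).
exists y; apply: Q_faithful; apply: (iso_cancell (al_iso b)).
have /= <- := al_nat _ _ y.
by rewrite /y -!ccompA va ccompf1.
Qed.

Lemma equivalence_ess_surj : equivalence F -> ess_surjective F.
Proof. by case=> Q [_ [be [_ be_iso]]] d; exists (Q d), (be d); apply: be_iso. Qed.

End EquivalenceFacts.

Section PreAdditive.
Variable A : PreAdd.

Lemma pcomp0l (a b c : A) (f : phom A a b) : pcomp (0 : phom A b c) f = 0.
Proof. exact: (addmorph0 (fun x y => pcompDl x y f)). Qed.

Lemma pcomp0r (a b c : A) (g : phom A b c) : pcomp g (0 : phom A a b) = 0.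
Proof. exact: (addmorph0 (pcompDr g)). Qed.

Lemma pcomp_suml (a b c : A) (I : Type) (r : seq I) (P : pred I)
    (F : I -> phom A b c) (f : phom A a b) :
  pcomp (\sum_(i <- r | P i) F i) f = \sum_(i <- r | P i) pcomp (F i) f.
Proof. exact: (addmorph_sum (fun x y => pcompDl x y f)). Qed.

Lemma pcomp_sumr (a b c : A) (I : Type) (r : seq I) (P : pred I)
    (F : I -> phom A a b) (g : phom A b c) :
  pcomp g (\sum_(i <- r | P i) F i) = \sum_(i <- r | P i) pcomp g (F i).
Proof. exact: (addmorph_sum (pcompDr g)). Qed.

Lemma pcompMnl (a b c : A) (g : phom A b c) (f : phom A a b) n :
  pcomp (g *+ n) f = pcomp g f *+ n.
Proof. exact: (addmorphMn (fun x y => pcompDl x y f)). Qed.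

Lemma pcompMnr (a b c : A) (g : phom A b c) (f : phom A a b) n :
  pcomp g (f *+ n) = pcomp g f *+ n.
Proof. exact: (addmorphMn (pcompDr g)). Qed.

Lemma piso_cancelr (a b c : A) (u : phom A a b) (x y : phom A b c) :
  is_iso (C := PCat A) u -> pcomp x u = pcomp y u -> x = y.
Proof. exact: (@iso_cancelr (PCat A)). Qed.

Lemma piso_cancell (a b c : A) (u : phom A b c) (x y : phom A a b) :
  is_iso (C := PCat A) u -> pcomp u x = pcomp u y -> x = y.
Proof. exact: (@iso_cancell (PCat A)). Qed.

Lemma is_iso_pcomp (a b c : A) (u : phom A b c) (v : phom A a b) :
  is_iso (C := PCat A) u -> is_iso (C := PCat A) v -> is_iso (C := PCat A) (pcomp u v).
Proof.
case=> u' [u'u uu'] [v' [v'v vv']]; exists (pcomp v' u'); split => /=.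
- by rewrite -pcompA (pcompA u') [pcomp u' u]u'u pcomp1f.
- by rewrite -pcompA (pcompA v) [pcomp v v']vv' pcomp1f.
Qed.

Section Inverse.
Variables (a b : A) (u : phom A a b) (hu : is_iso (C := PCat A) u).

Definition iso_inv : phom A b a := proj1_sig (constructive_indefinite_description _ hu).

Lemma iso_invl : pcomp iso_inv u = pid a.
Proof. exact: (proj1 (proj2_sig (constructive_indefinite_description _ hu))). Qed.

Lemma iso_invr : pcomp u iso_inv = pid b.
Proof. exact: (proj2 (proj2_sig (constructive_indefinite_description _ hu))). Qed.

End Inverse.
End PreAdditive.

Section AdditiveFunctor.
Variables (A B : PreAdd) (F : Functor (PCat A) (PCat B)).

Lemma fmap_pcomp (a b c : A) (g : phom A b c) (h : phom A a b) :
  (fmap F (pcomp g h) : phom B _ _) = pcomp (fmap F g : phom B _ _) (fmap F h : phom B _ _).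
Proof. exact: (fmap_comp F g h). Qed.

Lemma fmap_pid (a : A) : (fmap F (pid a) : phom B _ _) = pid (F a).
Proof. exact: (fmap_id F a). Qed.

Lemma fmap_iso (a b : A) (u : phom A a b) :
  is_iso (C := PCat A) u -> is_iso (C := PCat B) (fmap F u).
Proof.
case=> v [vu uv]; exists (fmap F v).
by split; rewrite /= -fmap_pcomp ?[pcomp v u]vu ?[pcomp u v]uv fmap_pid.
Qed.

Hypothesis hF : additive_functor F.

Lemma fmap0 (a b : A) : (fmap F (0 : phom A a b) : phom B _ _) = 0.
Proof. exact: (addmorph0 (@hF a b)). Qed.

Lemma fmap_sum (a b : A) (I : Type) (r : seq I) (P : pred I) (G : I -> phom A a b) :
  (fmap F (\sum_(i <- r | P i) G i) : phom B _ _)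
  = \sum_(i <- r | P i) (fmap F (G i) : phom B _ _).
Proof. exact: (addmorph_sum (@hF a b)). Qed.

Lemma fmapMn (a b : A) (x : phom A a b) n :
  (fmap F (x *+ n) : phom B _ _) = (fmap F x : phom B _ _) *+ n.
Proof. exact: (addmorphMn (@hF a b)). Qed.

End AdditiveFunctor.

Section Biproduct.
Variables (A : PreAdd) (I : finType) (X : I -> A) (B : biproduct X).

Lemma bp_proj_sum (Y : A) (x : forall i, phom A Y (X i)) i :
  pcomp (bp_proj B i) (\sum_j pcomp (bp_inj B j) (x j)) = x i.
Proof.
rewrite pcomp_sumr (bigD1 i) //= pcompA bp_projinj pcomp1f big1 ?addr0 // => j ji.
by rewrite pcompA bp_proj_inj0 ?pcomp0l // eq_sym.
Qed.

Lemma bp_sum_inj (Y : A) (y : forall i, phom A (X i) Y) i :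
  pcomp (\sum_j pcomp (y j) (bp_proj B j)) (bp_inj B i) = y i.
Proof.
rewrite pcomp_suml (bigD1 i) //= -pcompA bp_projinj pcompf1 big1 ?addr0 // => j ji.
by rewrite -pcompA bp_proj_inj0 ?pcomp0r.
Qed.

Lemma bp_proj_ext (Y : A) (u v : phom A Y (bp_obj B)) :
  (forall i, pcomp (bp_proj B i) u = pcomp (bp_proj B i) v) -> u = v.
Proof.
move=> e; rewrite -(pcomp1f u) -(pcomp1f v) -(bp_sum B) !pcomp_suml.
by apply: eq_bigr => i _; rewrite -!pcompA e.
Qed.

Lemma bp_inj_ext (Y : A) (u v : phom A (bp_obj B) Y) :
  (forall i, pcomp u (bp_inj B i) = pcomp v (bp_inj B i)) -> u = v.
Proof.
move=> e; rewrite -(pcompf1 u) -(pcompf1 v) -(bp_sum B) !pcomp_sumr.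
by apply: eq_bigr => i _; rewrite !pcompA e.
Qed.

End Biproduct.

Lemma bp_iso (A : PreAdd) (I : finType) (X : I -> A) (B B' : biproduct X) :
  is_iso (C := PCat A) (\sum_i pcomp (bp_inj B' i) (bp_proj B i)).
Proof.
exists (\sum_i pcomp (bp_inj B i) (bp_proj B' i)).
by split=> /=; apply: bp_inj_ext => i; rewrite pcomp1f -pcompA !bp_sum_inj.
Qed.

Definition some_biproduct (A : PreAdd) (hA : additive_cat A) (I : finType) (X : I -> A) :
  biproduct X :=
  proj1_sig (constructive_indefinite_description (fun _ : biproduct X => True)
               (let: inhabits B := hA I X in ex_intro _ B Logic.I)).

Section PseudoActionFacts.
Variables (Gam : finGroupType) (A' : PreAdd) (pa : pseudo_action Gam A').

Lemma act_cast_proj (C : A') (B : biproduct (fun g => pa g C)) (g g' : Gam) (e : g = g') :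
  pcomp (act_cast pa e C) (bp_proj B g) = bp_proj B g'.
Proof. by case: g' / e; rewrite /= pcomp1f. Qed.

Lemma act_cast_dd (D : ddatum pa) (g g' : Gam) (e : g = g') :
  dd_b D g = pcomp (dd_b D g') (act_cast pa e (dd_obj D)).
Proof. by case: g' / e; rewrite /= pcompf1. Qed.

Lemma dd_b1 (D : ddatum pa) : dd_b D 1%g = pa_e pa (dd_obj D).
Proof.
have b1_coc := dd_coc D 1%g 1%g.
rewrite (act_cast_dd D (mul1g 1%g)) -pcompA pa_unit_l in b1_coc.
have fb1 := piso_cancell (dd_iso D 1%g) b1_coc.
apply: (piso_cancelr (pa_e_iso pa (pa 1%g (dd_obj D)))).
by rewrite pa_e_nat fb1 -pa_e_nat.
Qed.

Section DescentIso.
Variables (D1 D2 : ddatum pa) (phi : ddhom D1 D2).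

Lemma ddhom_iso_val : is_iso (C := DescentCat pa) phi -> is_iso (C := PCat A') (proj1_sig phi).
Proof.
case=> psi [psiphi phipsi]; exists (proj1_sig psi).
by split; [exact: (congr1 (@proj1_sig _ _) psiphi) | exact: (congr1 (@proj1_sig _ _) phipsi)].
Qed.

Hypothesis phi_iso : is_iso (C := PCat A') (proj1_sig phi).

Lemma iso_inv_dd g :
  pcomp (iso_inv phi_iso) (dd_b D2 g) = pcomp (dd_b D1 g) (fmap (pa g) (iso_inv phi_iso)).
Proof.
apply: (piso_cancell phi_iso); apply: (piso_cancelr (fmap_iso (pa g) phi_iso)).
rewrite pcompA iso_invr pcomp1f pcompA (proj2_sig phi g) -!pcompA -fmap_pcomp.
by rewrite iso_invl fmap_pid pcompf1.
Qed.

Definition ddhom_inv : ddhom D2 D1 := exist _ (iso_inv phi_iso) iso_inv_dd.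

Lemma ddhom_iso : is_iso (C := DescentCat pa) phi.
Proof.
exists ddhom_inv; split; apply: sig_eqP; [exact: iso_invl | exact: iso_invr].
Qed.

End DescentIso.
End PseudoActionFacts.

Section Coinduced.
Variables (Gam : finGroupType) (A' : PreAdd) (pa : pseudo_action Gam A').
Variables (C : A') (B : biproduct (fun g => pa g C)).

Definition coind_b g : phom A' (pa g (bp_obj B)) (bp_obj B) :=
  \sum_h pcomp (bp_inj B (h * g)%g) (pcomp (pa_c pa h g C) (fmap (pa g) (bp_proj B h))).

Lemma proj_coind_b k g :
  pcomp (bp_proj B (k * g)%g) (coind_b g) = pcomp (pa_c pa k g C) (fmap (pa g) (bp_proj B k)).
Proof.
rewrite /coind_b pcomp_sumr (bigD1 k) //= pcompA bp_projinj pcomp1f big1 ?addr0 // => h hk.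
rewrite pcompA bp_proj_inj0 ?pcomp0l //.
by apply: contra hk => /eqP /mulIg ->.
Qed.

Lemma proj_coind_b1 g :
  pcomp (bp_proj B g) (coind_b g) = fmap (pa g) (pcomp (pa_e pa C) (bp_proj B 1%g)).
Proof.
by rewrite -(act_cast_proj _ (mul1g g)) -pcompA proj_coind_b pcompA pa_unit_l fmap_pcomp.
Qed.

Lemma bp_proj_ext_mulg g (Y : A') (u v : phom A' Y (bp_obj B)) :
  (forall k, pcomp (bp_proj B (k * g)%g) u = pcomp (bp_proj B (k * g)%g) v) -> u = v.
Proof.
move=> e; apply: bp_proj_ext => k.
by rewrite -(act_cast_proj _ (mulgKV g k)) -!pcompA e.
Qed.

Lemma coind_b_iso g : is_iso (C := PCat A') (coind_b g).
Proof.
pose cinv h := iso_inv (pa_c_iso pa h g C).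
exists (\sum_h pcomp (fmap (pa g) (bp_inj B h) : phom A' _ _)
                      (pcomp (cinv h) (bp_proj B (h * g)%g))); split => /=.
- rewrite pcomp_suml -(fmap_pid (pa g)) -(bp_sum B) (fmap_sum (pa_add pa g)).
  apply: eq_bigr => h _.
  by rewrite -!pcompA proj_coind_b (pcompA (cinv h)) iso_invl pcomp1f fmap_pcomp.
- apply: (bp_proj_ext_mulg (g := g)) => k.
  rewrite pcompf1 pcompA proj_coind_b pcomp_sumr (bigD1 k) //= big1 ?addr0 => [|h hk].
    rewrite -pcompA (pcompA (fmap (pa g) (bp_proj B k) : phom A' _ _)) -fmap_pcomp.
    by rewrite bp_projinj fmap_pid pcomp1f pcompA iso_invr pcomp1f.
  rewrite -pcompA (pcompA (fmap (pa g) (bp_proj B k) : phom A' _ _)) -fmap_pcomp.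
  by rewrite bp_proj_inj0 1?eq_sym // (fmap0 (pa_add pa g)) pcomp0l pcomp0r.
Qed.

Lemma coind_b_coc g h :
  pcomp (coind_b h) (fmap (pa h) (coind_b g) : phom A' _ _)
  = pcomp (coind_b (g * h)%g) (pa_c pa g h (bp_obj B)).
Proof.
apply: (bp_proj_ext_mulg (g := (g * h)%g)) => k.
rewrite [RHS]pcompA proj_coind_b -[RHS]pcompA pa_c_nat.
rewrite -[in LHS](act_cast_proj _ (esym (mulgA k g h))) -[LHS]pcompA.
rewrite (pcompA (bp_proj B (k * g * h)%g)) proj_coind_b -(pcompA (pa_c pa (k * g)%g h C)).
rewrite -fmap_pcomp proj_coind_b fmap_pcomp (pcompA (pa_c pa (k * g)%g h C)).
by rewrite (pcompA (act_cast _ _ _)) pa_assoc -pcompA.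
Qed.

Definition coind_dd : ddatum pa := Build_ddatum coind_b_iso coind_b_coc.

End Coinduced.

Section Equivariance.
Variables (Gam : finGroupType) (A A' : PreAdd) (pa : pseudo_action Gam A').
Variables (f : Functor (PCat A) (PCat A')) (E : equivariance pa f).

Lemma eq_i_iso g a : is_iso (C := PCat A') (eq_i E g a).
Proof. by exists (eq_iinv E g a); split; [exact: eq_i_inv1 | exact: eq_i_inv2]. Qed.

Lemma eq_iinv_nat g (a b : A) (phi : phom A a b) :
  pcomp (eq_iinv E g b) (fmap f phi : phom A' _ _)
  = pcomp (fmap (pa g) (fmap f phi) : phom A' _ _) (eq_iinv E g a).
Proof.
apply: (piso_cancell (eq_i_iso g b)).
rewrite pcompA eq_i_inv2 pcomp1f pcompA -eq_i_nat -pcompA eq_i_inv2.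
by rewrite pcompf1.
Qed.

Lemma pa_c_iinv g h a :
  pcomp (pa_c pa g h (f a)) (pcomp (fmap (pa h) (eq_iinv E g a)) (eq_iinv E h a))
  = eq_iinv E (g * h)%g a.
Proof.
apply: (piso_cancell (eq_i_iso (g * h)%g a)).
rewrite eq_i_inv2 pcompA eq_i_coc -pcompA (pcompA (fmap (pa h) (eq_i E g a))).
by rewrite -fmap_pcomp eq_i_inv2 fmap_pid pcomp1f eq_i_inv2.
Qed.

Lemma eq_i1 a : eq_i E 1%g a = pa_e pa (f a).
Proof. exact: (dd_b1 (hat_obj E a)). Qed.

Section CoinducedLift.
Variables (C : A') (B : biproduct (fun g => pa g C)).

Definition coind_lift (a : A) (x : phom A' (f a) C) : phom A' (f a) (bp_obj B) :=
  \sum_h pcomp (bp_inj B h) (pcomp (fmap (pa h) x) (eq_iinv E h a)).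

Lemma proj_coind_lift a x h :
  pcomp (bp_proj B h) (@coind_lift a x) = pcomp (fmap (pa h) x) (eq_iinv E h a).
Proof. exact: bp_proj_sum. Qed.

Lemma coind_lift_dd a x g :
  pcomp (@coind_lift a x) (eq_i E g a)
  = pcomp (coind_b B g) (fmap (pa g) (@coind_lift a x) : phom A' _ _).
Proof.
apply: (bp_proj_ext_mulg (g := g)) => k.
rewrite pcompA proj_coind_lift [RHS]pcompA proj_coind_b -[RHS]pcompA -fmap_pcomp.
rewrite proj_coind_lift fmap_pcomp [RHS]pcompA -pa_c_nat -[RHS]pcompA.
by rewrite -(pa_c_iinv k g) -!pcompA eq_i_inv1 pcompf1.
Qed.

Definition coind_lift_hom a x : ddhom (hat_obj E a) (coind_dd B) :=
  exist _ (@coind_lift a x) (coind_lift_dd x).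

Lemma coind_liftE a (Psi : ddhom (hat_obj E a) (coind_dd B)) :
  proj1_sig Psi = coind_lift (pcomp (pa_e pa C) (pcomp (bp_proj B 1%g) (proj1_sig Psi))).
Proof.
apply: bp_proj_ext => h; rewrite proj_coind_lift.
apply: (piso_cancelr (eq_i_iso h a)).
rewrite -pcompA eq_i_inv1 pcompf1 -pcompA (proj2_sig Psi h) /= pcompA proj_coind_b1.
by rewrite -fmap_pcomp pcompA.
Qed.

End CoinducedLift.
End Equivariance.

Section AdjunctionFacts.
Variables (A A' : PreAdd) (f : Functor (PCat A) (PCat A')) (G : Functor (PCat A') (PCat A)).
Variable adj : adjunction f G.

Lemma adj_eta_natE (a b : A) (phi : phom A a b) :
  pcomp (fmap G (fmap f phi) : phom A _ _) (adj_eta adj a) = pcomp (adj_eta adj b) phi.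
Proof. exact: (adj_eta_nat adj phi). Qed.

Lemma adj_eps_natE (c d : A') (phi : phom A' c d) :
  pcomp phi (adj_eps adj c) = pcomp (adj_eps adj d) (fmap f (fmap G phi) : phom A' _ _).
Proof. exact: (adj_eps_nat adj phi). Qed.

Definition adj_transpose (a : A) (C : A') (x : phom A' (f a) C) : phom A a (G C) :=
  pcomp (fmap G x : phom A _ _) (adj_eta adj a).

Lemma adj_transposeK (a : A) (C : A') (x : phom A' (f a) C) :
  pcomp (adj_eps adj C) (fmap f (adj_transpose x) : phom A' _ _) = x.
Proof.
rewrite /adj_transpose fmap_pcomp pcompA -adj_eps_natE -pcompA.
by rewrite (adj_tri1 adj) pcompf1.
Qed.

Lemma adj_transpose_inj (a : A) (C : A') (u v : phom A a (G C)) :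
  pcomp (adj_eps adj C) (fmap f u : phom A' _ _)
  = pcomp (adj_eps adj C) (fmap f v : phom A' _ _) -> u = v.
Proof.
have transposeE (w : phom A a (G C)) :
    adj_transpose (pcomp (adj_eps adj C) (fmap f w : phom A' _ _)) = w.
  by rewrite /adj_transpose fmap_pcomp -pcompA adj_eta_natE pcompA (adj_tri2 adj) pcomp1f.
by move=> e; rewrite -(transposeE u) -(transposeE v) e.
Qed.

End AdjunctionFacts.

Section UniversalArrows.
Variables (A A' : PreAdd) (f : Functor (PCat A) (PCat A')) (G0 : A' -> A).
Variable eps0 : forall C : A', phom A' (f (G0 C)) C.
Variable lift : forall (a : A) (C : A'), phom A' (f a) C -> phom A a (G0 C).
Hypothesis liftK : forall a C (x : phom A' (f a) C),
  pcomp (eps0 C) (fmap f (lift x) : phom A' _ _) = x.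
Hypothesis lift_uniq : forall a C (x : phom A' (f a) C) (y : phom A a (G0 C)),
  pcomp (eps0 C) (fmap f y : phom A' _ _) = x -> y = lift x.

Lemma lift_inj a C (y y' : phom A a (G0 C)) :
  pcomp (eps0 C) (fmap f y : phom A' _ _) = pcomp (eps0 C) (fmap f y' : phom A' _ _) -> y = y'.
Proof. by move=> e; rewrite (lift_uniq e) -(lift_uniq (erefl _)). Qed.

Definition ua_map (C D : A') (phi : phom A' C D) : phom A (G0 C) (G0 D) :=
  lift (pcomp phi (eps0 C)).

Lemma ua_mapK (C D : A') (phi : phom A' C D) :
  pcomp (eps0 D) (fmap f (ua_map phi) : phom A' _ _) = pcomp phi (eps0 C).
Proof. exact: liftK. Qed.

Definition ua_functor : Functor (PCat A') (PCat A).
Proof.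
refine (@Build_Functor (PCat A') (PCat A) G0 ua_map _ _).
- by move=> C /=; apply: lift_inj; rewrite ua_mapK fmap_pid pcompf1 pcomp1f.
- move=> C D E' g h /=; apply: lift_inj.
  by rewrite ua_mapK fmap_pcomp [RHS]pcompA ua_mapK -[RHS]pcompA ua_mapK pcompA.
Defined.

Definition ua_adjunction : adjunction f ua_functor.
Proof.
refine (@Build_adjunction _ _ f ua_functor (fun a => lift (pid (f a))) eps0 _ _ _ _).
- move=> a b phi /=; apply: lift_inj.
  by rewrite !fmap_pcomp !pcompA ua_mapK liftK -pcompA liftK pcompf1 pcomp1f.
- by move=> C D phi /=; rewrite ua_mapK.
- by move=> a; rewrite liftK.
- move=> C /=; apply: lift_inj.
  by rewrite fmap_pcomp pcompA ua_mapK -pcompA liftK pcompf1 fmap_pid pcompf1.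
Defined.

End UniversalArrows.

Section Kappa.
Variables (Gam : finGroupType) (A A' : PreAdd) (pa : pseudo_action Gam A').
Variables (f : Functor (PCat A) (PCat A')) (E : equivariance pa f).
Variables (G : Functor (PCat A') (PCat A)) (adj : adjunction f G).

Local Notation kappa := (kappa_comp E adj).

Lemma kappa_nat g (C D : A') (x : phom A' C D) :
  pcomp (kappa g D) (fmap f (fmap G x) : phom A' _ _)
  = pcomp (fmap (pa g) x : phom A' _ _) (kappa g C).
Proof.
rewrite /kappa_comp -pcompA eq_iinv_nat !pcompA; congr pcomp.
by rewrite -!fmap_pcomp adj_eps_natE.
Qed.

Lemma kappa_eq_i g (C : A') :
  pcomp (kappa g C) (eq_i E g (G C)) = fmap (pa g) (adj_eps adj C).
Proof. by rewrite /kappa_comp -pcompA eq_i_inv1 pcompf1. Qed.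

Lemma kappa_transpose g (a : A) (C : A') (x : phom A' (f a) C) :
  pcomp (kappa g C) (fmap f (adj_transpose adj x) : phom A' _ _)
  = pcomp (fmap (pa g) x : phom A' _ _) (eq_iinv E g a).
Proof.
by rewrite /kappa_comp -pcompA eq_iinv_nat pcompA -fmap_pcomp adj_transposeK.
Qed.

Lemma kappa_eta g (a : A) :
  pcomp (kappa g (f a)) (fmap f (adj_eta adj a) : phom A' _ _) = eq_iinv E g a.
Proof.
have := kappa_transpose g (pid (f a)).
by rewrite /adj_transpose !fmap_pid pcomp1f => ->; rewrite pcomp1f.
Qed.

Lemma pa_e_kappa1 (C : A') : pcomp (pa_e pa C) (kappa 1%g C) = adj_eps adj C.
Proof.
by rewrite /kappa_comp pcompA -pa_e_nat -pcompA -(eq_i1 E) eq_i_inv2 pcompf1.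
Qed.

Lemma pa_c_kappa g h (C : A') :
  pcomp (pa_c pa g h C) (pcomp (fmap (pa h) (kappa g C) : phom A' _ _) (eq_iinv E h (G C)))
  = kappa (g * h)%g C.
Proof.
rewrite /kappa_comp fmap_pcomp -pcompA (pcompA (pa_c _ _ _ _)) -pa_c_nat -pcompA.
by rewrite pa_c_iinv.
Qed.

Definition sigma_u (D : ddatum pa) : phom A' (f (G (dd_obj D))) (dd_obj D) :=
  \sum_g pcomp (dd_b D g) (kappa g (dd_obj D)).

Lemma sigma_u_dd (D : ddatum pa) g :
  pcomp (sigma_u D) (eq_i E g (G (dd_obj D)))
  = pcomp (dd_b D g) (fmap (pa g) (sigma_u D) : phom A' _ _).
Proof.
rewrite /sigma_u pcomp_suml (fmap_sum (pa_add pa g)) pcomp_sumr (reindex_inj (mulIg g)) /=.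
apply: eq_bigr => k _.
rewrite fmap_pcomp [RHS]pcompA dd_coc -[LHS]pcompA -[RHS]pcompA; congr pcomp.
by rewrite -pa_c_kappa -!pcompA eq_i_inv1 pcompf1.
Qed.

Definition sigma_u_hom (D : ddatum pa) : ddhom (hat_obj E (G (dd_obj D))) D :=
  exist _ (sigma_u D) (sigma_u_dd D).

Lemma sigma_u_nat (D D' : ddatum pa) (chi : ddhom D D') :
  pcomp (proj1_sig chi) (sigma_u D)
  = pcomp (sigma_u D') (fmap f (fmap G (proj1_sig chi)) : phom A' _ _).
Proof.
rewrite /sigma_u pcomp_sumr pcomp_suml; apply: eq_bigr => g _.
by rewrite pcompA (proj2_sig chi g) -pcompA -kappa_nat pcompA.
Qed.

Lemma sigma_u_eta (a : A) :
  pcomp (sigma_u (hat_obj E a)) (fmap f (adj_eta adj a) : phom A' _ _) = pid (f a) *+ #|Gam|.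
Proof.
rewrite /sigma_u pcomp_suml -sumr_const; apply: eq_bigr => g _.
by rewrite -pcompA kappa_eta eq_i_inv2.
Qed.

End Kappa.

Section InverseOfN.
Variables (A : PreAdd) (n : nat) (hZ : Zinv_linear n A).

Lemma natmul_inj (a b : A) (x y : phom A a b) : x *+ n = y *+ n -> x = y.
Proof. exact: (bij_inj (hZ a b)). Qed.

Lemma inv_n_exists (a : A) : exists nu : phom A a a, nu *+ n = pid a.
Proof. by case: (hZ a a) => g _ gK; exists (g (pid a)); exact: gK. Qed.

Definition inv_n (a : A) : phom A a a :=
  proj1_sig (constructive_indefinite_description _ (inv_n_exists a)).

Lemma inv_nP (a : A) : inv_n a *+ n = pid a.
Proof. exact: (proj2_sig (constructive_indefinite_description _ (inv_n_exists a))). Qed.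

Lemma inv_n_nat (a b : A) (x : phom A a b) : pcomp (inv_n b) x = pcomp x (inv_n a).
Proof.
by apply: natmul_inj; rewrite -pcompMnl -pcompMnr !inv_nP pcomp1f pcompf1.
Qed.

End InverseOfN.

Section IdempotentSplitting.
Variables (A : PreAdd) (hA : pseudo_abelian A) (a : A) (e : phom A a a).
Hypothesis e_idem : pcomp e e = e.

Lemma idem_split_exists :
  exists t : {c : A & (phom A a c * phom A c a)%type},
    pcomp (projT2 t).1 (projT2 t).2 = pid _ /\ pcomp (projT2 t).2 (projT2 t).1 = e.
Proof. by have [c [r [s rs_sr]]] := hA e_idem; exists (existT _ c (r, s)). Qed.

Let split := constructive_indefinite_description _ idem_split_exists.

Definition idem_obj : A := projT1 (proj1_sig split).
Definition idem_r : phom A a idem_obj := (projT2 (proj1_sig split)).1.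
Definition idem_s : phom A idem_obj a := (projT2 (proj1_sig split)).2.

Lemma idem_rs : pcomp idem_r idem_s = pid idem_obj.
Proof. exact: (proj1 (proj2_sig split)). Qed.

Lemma idem_sr : pcomp idem_s idem_r = e.
Proof. exact: (proj2 (proj2_sig split)). Qed.

Lemma idem_es : pcomp e idem_s = idem_s.
Proof. by rewrite -idem_sr -pcompA idem_rs pcompf1. Qed.

End IdempotentSplitting.

Section DescentFromTrace.
Variables (Gam : finGroupType) (A A' : PreAdd) (pa : pseudo_action Gam A').
Variables (f : Functor (PCat A) (PCat A')) (E : equivariance pa f).
Hypotheses (hA' : additive_cat A') (hf : additive_functor f).
Hypotheses (hA : pseudo_abelian A) (hZ : Zinv_linear #|Gam| A).
Variables (G : Functor (PCat A') (PCat A)) (adj : adjunction f G).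
Hypothesis hcart : cartesian E adj.
Variable tr : forall a : A, phom A (G (f a)) a.
Hypothesis htr : trace_structure E adj tr.

Local Notation n := #|Gam|.
Local Notation eps := (adj_eps adj).
Local Notation eta := (adj_eta adj).
Local Notation kappa := (kappa_comp E adj).
Local Notation nu := (inv_n hZ).
Local Notation sigma_u := (sigma_u E adj).

Lemma fmap_inv_nP (a : A) : (fmap f (nu a) : phom A' _ _) *+ n = pid (f a).
Proof. by rewrite -(fmapMn hf) inv_nP fmap_pid. Qed.

Section Object.
Variable D : ddatum pa.
Local Notation C := (dd_obj D).
Local Notation binv g := (iso_inv (dd_iso D g)).

Let B := some_biproduct hA' (fun g => pa g C).

Lemma kappa_proj_sum g :
  kappa g C = pcomp (bp_proj B g) (\sum_h pcomp (bp_inj B h) (kappa h C)).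
Proof. by rewrite bp_proj_sum. Qed.

Lemma kappa_ext (Y : A') (x y : phom A' Y (f (G C))) :
  (forall g, pcomp (kappa g C) x = pcomp (kappa g C) y) -> x = y.
Proof.
move=> e; apply: (piso_cancell (hcart B)); apply: bp_proj_ext => g.
by rewrite !pcompA -!kappa_proj_sum e.
Qed.

(* Through [kappa], the section is [(b_g^-1)_g : C -> (+)_g g^* C]. *)
Definition dd_section : phom A' C (f (G C)) :=
  pcomp (iso_inv (hcart B)) (\sum_h pcomp (bp_inj B h) (binv h)).

Lemma kappa_section g : pcomp (kappa g C) dd_section = binv g.
Proof.
by rewrite kappa_proj_sum -pcompA (pcompA _ (iso_inv _)) iso_invr pcomp1f bp_proj_sum.
Qed.

Lemma sigma_u_section : pcomp (sigma_u D) dd_section = pid C *+ n.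
Proof.
rewrite /sigma_u pcomp_suml -sumr_const; apply: eq_bigr => g _.
by rewrite -pcompA kappa_section iso_invr.
Qed.

Lemma eps_section : pcomp (eps C) dd_section = pid C.
Proof. by rewrite -(pa_e_kappa1 E) -dd_b1 -pcompA kappa_section iso_invr. Qed.

Definition dd_q : phom A (G C) (G C) := adj_transpose adj (sigma_u D).
Definition dd_p : phom A (G C) (G C) := pcomp dd_q (nu (G C)).

Lemma kappa_q g : pcomp (kappa g C) (fmap f dd_q) = pcomp (binv g) (sigma_u D).
Proof.
rewrite kappa_transpose; apply: (piso_cancell (dd_iso D g)).
by rewrite pcompA -sigma_u_dd -pcompA eq_i_inv2 pcompf1 pcompA iso_invr pcomp1f.
Qed.

Lemma fmap_q : fmap f dd_q = pcomp dd_section (sigma_u D).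
Proof. by apply: kappa_ext => g; rewrite kappa_q pcompA kappa_section. Qed.

Lemma fmap_p :
  fmap f dd_p = pcomp dd_section (pcomp (sigma_u D) (fmap f (nu (G C)))).
Proof. by rewrite /dd_p fmap_pcomp fmap_q -pcompA. Qed.

Lemma eps_p : pcomp (eps C) (fmap f dd_p) = pcomp (sigma_u D) (fmap f (nu (G C))).
Proof. by rewrite fmap_pcomp pcompA adj_transposeK. Qed.

Lemma section_eps_p : pcomp dd_section (pcomp (eps C) (fmap f dd_p)) = fmap f dd_p.
Proof. by rewrite eps_p fmap_p. Qed.

Lemma eps_p_section : pcomp (eps C) (pcomp (fmap f dd_p) dd_section) = pid C.
Proof.
rewrite /dd_p -inv_n_nat fmap_pcomp fmap_q -(pcompA (fmap f _)) -(pcompA dd_section).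
rewrite sigma_u_section pcompMnr pcompf1 pcompMnr -pcompMnl fmap_inv_nP pcomp1f.
exact: eps_section.
Qed.

Lemma dd_p_idem : pcomp dd_p dd_p = dd_p.
Proof.
apply: (adj_transpose_inj (adj := adj)); rewrite fmap_pcomp {2}fmap_p.
by rewrite (pcompA (fmap f dd_p)) (pcompA (eps C)) eps_p_section pcomp1f eps_p.
Qed.

End Object.

Local Notation Q D := (idem_obj hA (dd_p_idem D)).
Local Notation r D := (idem_r hA (dd_p_idem D)).
Local Notation s D := (idem_s hA (dd_p_idem D)).

Lemma dd_p_nat (D D' : ddatum pa) (chi : ddhom D D') :
  pcomp (dd_p D') (fmap G (proj1_sig chi))
  = pcomp (fmap G (proj1_sig chi) : phom A _ _) (dd_p D).
Proof.
apply: (adj_transpose_inj (adj := adj)).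
rewrite (fmap_pcomp f (dd_p D')) (fmap_pcomp f _ (dd_p D)) [LHS]pcompA eps_p.
rewrite -[LHS]pcompA -[in LHS]fmap_pcomp inv_n_nat fmap_pcomp [LHS]pcompA -sigma_u_nat.
by rewrite [RHS]pcompA -adj_eps_natE -[RHS]pcompA eps_p pcompA.
Qed.

Definition desc_map (D D' : ddatum pa) (chi : ddhom D D') : phom A (Q D) (Q D') :=
  pcomp (r D') (pcomp (fmap G (proj1_sig chi)) (s D)).

Definition desc_functor : Functor (DescentCat pa) (PCat A).
Proof.
refine (@Build_Functor (DescentCat pa) (PCat A) (fun D => Q D) desc_map _ _).
- by move=> D; rewrite /desc_map /= fmap_pid pcomp1f idem_rs.
- move=> D1 D2 D3 psi phi; rewrite /desc_map /= fmap_pcomp -!pcompA; congr pcomp.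
  rewrite (pcompA (s D2)) idem_sr (pcompA (dd_p D2)) dd_p_nat -(pcompA (fmap G _)).
  by rewrite idem_es pcompA.
Defined.

Lemma sigma_u_hat a : sigma_u (hat_obj E a) = fmap f (tr a).
Proof. by rewrite (proj2 (proj2 htr) a). Qed.

Lemma tr_nat (a b : A) (phi : phom A a b) :
  pcomp phi (tr a) = pcomp (tr b) (fmap G (fmap f phi) : phom A _ _).
Proof. exact: (proj1 htr a b phi). Qed.

Lemma nu_tr_eta a : pcomp (nu a) (pcomp (tr a) (eta a)) = pid a.
Proof. by rewrite (proj1 (proj2 htr)) pcompMnr pcompf1 inv_nP. Qed.

Lemma dd_p_hat a : dd_p (hat_obj E a) = pcomp (eta a) (pcomp (nu a) (tr a)).
Proof.
by rewrite /dd_p /dd_q /adj_transpose sigma_u_hat adj_eta_natE -pcompA -inv_n_nat.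
Qed.

Definition desc_unit a : phom A (Q (hat_obj E a)) a :=
  pcomp (nu a) (pcomp (tr a) (s (hat_obj E a))).

Lemma desc_unit_iso a : is_iso (C := PCat A) (desc_unit a).
Proof.
exists (pcomp (r (hat_obj E a)) (eta a)); split => /=.
- rewrite -pcompA.
  have -> : pcomp (eta a) (desc_unit a) = pcomp (dd_p (hat_obj E a)) (s (hat_obj E a)).
    by rewrite /desc_unit !pcompA; congr pcomp; rewrite dd_p_hat pcompA.
  by rewrite idem_es idem_rs.
- rewrite /desc_unit -!pcompA (pcompA (s (hat_obj E a))) idem_sr dd_p_hat -!pcompA.
  by rewrite nu_tr_eta pcompf1 nu_tr_eta.
Qed.

Lemma desc_unit_nat :
  natural (F := Fcomp desc_functor (hat_f E)) (G := Fid (PCat A)) desc_unit.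
Proof.
move=> a b phi /=; rewrite /desc_unit /desc_map /= -!pcompA.
rewrite (pcompA (s (hat_obj E b))) idem_sr (pcompA (dd_p (hat_obj E b))).
have /= -> := dd_p_nat (hat_map E phi).
rewrite -(pcompA (fmap G _)) idem_es (pcompA (tr b)) -tr_nat.
by rewrite !pcompA inv_n_nat.
Qed.

Lemma sigma_u_fmap_nu_s D :
  pcomp (sigma_u D) (fmap f (pcomp (nu _) (s D))) = pcomp (eps _) (fmap f (s D)).
Proof.
rewrite -[in RHS]idem_es (fmap_pcomp f (dd_p D)) (fmap_pcomp f (nu _)).
by rewrite [LHS]pcompA [RHS]pcompA eps_p.
Qed.

(* Written this way it is a descent morphism for free; by [sigma_u_fmap_nu_s]
   it is [eps o f^* s]. *)
Definition desc_counit D : ddhom (hat_obj E (Q D)) D :=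
  ddcomp (sigma_u_hom E adj D) (hat_map E (pcomp (nu _) (s D))).

Lemma desc_counit_iso D : is_iso (C := DescentCat pa) (desc_counit D).
Proof.
apply: ddhom_iso; rewrite /= sigma_u_fmap_nu_s.
exists (pcomp (fmap f (r D)) (dd_section D)); split => /=.
- rewrite -[in LHS]idem_es (fmap_pcomp f (dd_p D)) -pcompA (pcompA (eps _)).
  rewrite (pcompA (dd_section D)) section_eps_p -fmap_pcomp idem_es -fmap_pcomp.
  by rewrite idem_rs fmap_pid.
- by rewrite -pcompA (pcompA (fmap f (s D))) -fmap_pcomp idem_sr eps_p_section.
Qed.

Lemma desc_counit_nat :
  natural (F := Fcomp (hat_f E) desc_functor) (G := Fid (DescentCat pa)) desc_counit.
Proof.
move=> D D' chi; apply: sig_eqP; rewrite /= !sigma_u_fmap_nu_s /desc_map.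
rewrite [LHS]pcompA adj_eps_natE -[LHS]pcompA -fmap_pcomp -[RHS]pcompA -fmap_pcomp.
rewrite (pcompA (s D')) idem_sr (pcompA (dd_p D')) dd_p_nat.
by rewrite -pcompA idem_es.
Qed.

Lemma descent_of_cartesian_trace : has_descent E.
Proof.
exists desc_functor; split.
- by exists desc_unit; split; [exact: desc_unit_nat | exact: desc_unit_iso].
- by exists desc_counit; split; [exact: desc_counit_nat | exact: desc_counit_iso].
Qed.

End DescentFromTrace.

Section CartesianFromDescent.
Variables (Gam : finGroupType) (A A' : PreAdd) (pa : pseudo_action Gam A').
Variables (f : Functor (PCat A) (PCat A')) (E : equivariance pa f).
Hypotheses (hA' : additive_cat A') (hf : additive_functor f).
Hypotheses (hat_full : full_functor (hat_f E)) (hat_faithful : faithful_functor (hat_f E)).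
Hypothesis hat_ess : ess_surjective (hat_f E).

Lemma fmap_faithful (a b : A) (y y' : phom A a b) :
  (fmap f y : phom A' _ _) = fmap f y' -> y = y'.
Proof. by move=> e; apply: hat_faithful; apply: sig_eqP. Qed.

Definition hat_pre (a b : A) (z : ddhom (hat_obj E a) (hat_obj E b)) : phom A a b :=
  proj1_sig (constructive_indefinite_description _ (hat_full z)).

Lemma fmap_hat_pre (a b : A) (z : ddhom (hat_obj E a) (hat_obj E b)) :
  (fmap f (hat_pre z) : phom A' _ _) = proj1_sig z.
Proof.
exact: (congr1 (@proj1_sig _ _)
          (proj2_sig (constructive_indefinite_description _ (hat_full z)))).
Qed.

Let lift_sig (D : ddatum pa) := constructive_indefinite_description _ (hat_ess D).

Definition dd_lift (D : ddatum pa) : A := proj1_sig (lift_sig D).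

Definition dd_lift_iso (D : ddatum pa) : ddhom (hat_obj E (dd_lift D)) D :=
  proj1_sig (constructive_indefinite_description _ (proj2_sig (lift_sig D))).

Lemma dd_lift_isoP (D : ddatum pa) : is_iso (C := PCat A') (proj1_sig (dd_lift_iso D)).
Proof.
apply: ddhom_iso_val.
exact: (proj2_sig (constructive_indefinite_description _ (proj2_sig (lift_sig D)))).
Qed.

Local Notation B C := (some_biproduct hA' (fun g => pa g C)).
Local Notation iota C := (dd_lift_iso (coind_dd (B C))).

Definition fstar_obj (C : A') : A := dd_lift (coind_dd (B C)).

Definition fstar_eps (C : A') : phom A' (f (fstar_obj C)) C :=
  pcomp (pa_e pa C) (pcomp (bp_proj (B C) 1%g) (proj1_sig (iota C))).

Definition fstar_lift (a : A) (C : A') (x : phom A' (f a) C) : phom A a (fstar_obj C) :=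
  hat_pre (ddcomp (ddhom_inv (dd_lift_isoP _)) (coind_lift_hom E (B C) x)).

Lemma fstar_liftK a C (x : phom A' (f a) C) :
  pcomp (fstar_eps C) (fmap f (fstar_lift x) : phom A' _ _) = x.
Proof.
rewrite fmap_hat_pre /= /fstar_eps -!pcompA (pcompA (proj1_sig (iota C))) iso_invr pcomp1f.
by rewrite proj_coind_lift pcompA -pa_e_nat -pcompA -(eq_i1 E) eq_i_inv2 pcompf1.
Qed.

Lemma fstar_lift_uniq a C (x : phom A' (f a) C) (y : phom A a (fstar_obj C)) :
  pcomp (fstar_eps C) (fmap f y : phom A' _ _) = x -> y = fstar_lift x.
Proof.
move=> eps_y; apply: fmap_faithful; rewrite fmap_hat_pre /=.
have iota_y : pcomp (proj1_sig (iota C)) (fmap f y) = coind_lift E (B C) x.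
  have /= -> := coind_liftE (ddcomp (iota C) (hat_map E y)).
  by rewrite (pcompA (bp_proj _ _)) (pcompA (pa_e _ _)) -/(fstar_eps C) eps_y.
by rewrite -iota_y pcompA iso_invl pcomp1f.
Qed.

Definition fstar : Functor (PCat A') (PCat A) := ua_functor fstar_liftK fstar_lift_uniq.
Definition fstar_adjunction : adjunction f fstar := ua_adjunction fstar_liftK fstar_lift_uniq.

Lemma kappa_fstar g C :
  kappa_comp E fstar_adjunction g C = pcomp (bp_proj (B C) g) (proj1_sig (iota C)).
Proof.
apply: (piso_cancelr (eq_i_iso E g (fstar C))).
rewrite kappa_eq_i -pcompA (proj2_sig (iota C) g) /= pcompA proj_coind_b1.
by rewrite -fmap_pcomp -pcompA.
Qed.

Lemma fstar_cartesian : cartesian E fstar_adjunction.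
Proof.
move=> C B'.
have -> : \sum_g pcomp (bp_inj B' g) (kappa_comp E fstar_adjunction g C)
    = pcomp (\sum_g pcomp (bp_inj B' g) (bp_proj (B C) g)) (proj1_sig (iota C)).
  by rewrite pcomp_suml; apply: eq_bigr => g _; rewrite kappa_fstar pcompA.
apply: is_iso_pcomp; [exact: bp_iso | exact: dd_lift_isoP].
Qed.

Definition fstar_trace (a : A) : phom A (fstar (f a)) a :=
  hat_pre (sigma_u_hom E fstar_adjunction (hat_obj E a)).

Lemma fmap_fstar_trace (a : A) :
  fmap f (fstar_trace a) = sigma_u E fstar_adjunction (hat_obj E a).
Proof. exact: fmap_hat_pre. Qed.

Lemma fstar_trace_structure : trace_structure E fstar_adjunction fstar_trace.
Proof.
split; [|split] => [a b phi /=|a|a]; last exact: fmap_fstar_trace.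
- apply: fmap_faithful; rewrite !fmap_pcomp !fmap_fstar_trace.
  exact: (sigma_u_nat E fstar_adjunction (hat_map E phi)).
- apply: fmap_faithful; rewrite fmap_pcomp fmap_fstar_trace (fmapMn hf) fmap_pid.
  exact: sigma_u_eta.
Qed.

Lemma cartesian_trace_of_descent :
  exists (G : Functor (PCat A') (PCat A)) (adj : adjunction f G),
    cartesian E adj /\ exists tr, trace_structure E adj tr.
Proof.
exists fstar, fstar_adjunction; split; first exact: fstar_cartesian.
by exists fstar_trace; exact: fstar_trace_structure.
Qed.

End CartesianFromDescent.

Theorem proposition2p11 (Gam : finGroupType) (A A' : PreAdd)
  (hA : additive_cat A) (hA' : additive_cat A')
  (pa : pseudo_action Gam A')
  (f : Functor (PCat A) (PCat A')) (hf : additive_functor f)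
  (E : equivariance pa f) :
  (has_descent E ->
     exists (G : Functor (PCat A') (PCat A)) (adj : adjunction f G),
       cartesian E adj /\ exists tr, trace_structure E adj tr)
  /\
  (pseudo_abelian A -> Zinv_linear #|Gam| A ->
     forall (G : Functor (PCat A') (PCat A)) (adj : adjunction f G),
       cartesian E adj ->
       forall tr, trace_structure E adj tr -> has_descent E).
Proof.
split=> [hd | hpa hZ G adj hcart tr htr].
- exact: (cartesian_trace_of_descent hA' hf (equivalence_full hd)
            (equivalence_faithful hd) (equivalence_ess_surj hd)).
- exact: (descent_of_cartesian_trace hA' hf hpa hZ hcart htr).
Qed.
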